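(* Let $r \ge 3$ and $2 \le k \le r$ be integers and let $n \ge 2\binom{2k-1}{k}^{-1}(r-k)r^{k+1}$. Let $\mathcal{H}$ be an intersecting $r$-uniform $n$-vertex hypergraph with $\delta_{r-1}^+(\mathcal{H}) \ge k$ having the maximum number of hyperedges among all intersecting $r$-uniform $n$-vertex hypergraphs with minimum positive co-degree at least $k$. Then $\tau(\mathcal{H}) = k$.
   Context: A hypergraph is intersecting if every two of its hyperedges share at least one vertex. For a non-empty $r$-uniform hypergraph $\mathcal{H}$, the minimum positive co-degree $\delta_{r-1}^+(\mathcal{H})$ is the largest integer $k$ such that every $(r-1)$-set of vertices that is contained in at least one hyperedge of $\mathcal{H}$ is contained in at least $k$ distinct hyperedges of $\mathcal{H}$; for the empty hypergraph it is $0$. A transversal of $\mathcal{H}$ is a set of vertices meeting every hyperedge, and $\tau(\mathcal{H})$ is the minimum size of a transversal. *)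

From mathcomp Require Import all_boot.
Set Implicit Arguments. Unset Strict Implicit. Unset Printing Implicit Defensive.

Definition hgraph (n : nat) := {set {set 'I_n}}.

Definition uniform n (r : nat) (H : hgraph n) : bool :=
  [forall e in H, #|e| == r].

Definition intersecting n (H : hgraph n) : bool :=
  [forall e in H, forall f in H, e :&: f != set0].

Definition hdeg n (H : hgraph n) (S : {set 'I_n}) : nat :=
  #|[set e in H | S \subset e]|.

(* The default #|H| is harmless since every such degree is <= #|H|. *)
Definition min_pos_codeg n (r : nat) (H : hgraph n) : nat :=
  \big[minn/#|H|]_(S : {set 'I_n} | (#|S| == r.-1) && [exists e in H, S \subset e])
     hdeg H S.

Definition transversal n (H : hgraph n) (T : {set 'I_n}) : bool :=
  [forall e in H, T :&: e != set0].

(* transversal number: minimum size of a transversal (default n is never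
   smaller than any candidate) *)
Definition tau n (H : hgraph n) : nat :=
  \big[minn/n]_(T : {set 'I_n} | transversal H T) #|T|.

From Pilot Require Import Defs.
From mathcomp Require Import all_boot zify.
Set Implicit Arguments. Unset Strict Implicit. Unset Printing Implicit Defensive.

(* Lower bound, valid for every r-uniform H: if an edge e meets a transversal
   T in as few vertices as possible and x is in e and T, then every edge
   through the (r-1)-set e minus x is obtained by adding a vertex of T, so the
   minimum positive co-degree is at most |T|.

   If k = r, any edge is a transversal, H being intersecting.
   If k < r and tau(H) > k, repeatedly branching on an edge missed by the
   current set S (every edge through S meets it) gives
   |H| <= r^(k+1) C(n-k-1, r-k-1).  The "majority" hypergraph of all r-sets
   meeting a fixed (2k-1)-set in at least k vertices is intersecting, has
   minimum positive co-degree at least k and at least C(2k-1,k) C(n-2k+1,r-k)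
   edges; under the threshold on n this exceeds the previous bound,
   contradicting the maximality of H. *)

Lemma leq_exp2r_any m n e : m <= n -> m ^ e <= n ^ e.
Proof. by case: e => [//|e] le_mn; rewrite leq_exp2r. Qed.

Lemma bernoulli_sub N q m : q <= N -> N ^ m <= (N - q) ^ m + m * q * N ^ m.-1.
Proof.
move=> le_qN; elim: m => [|m IH]; first by rewrite !expn0.
have le_pow : (N - q) ^ m <= N ^ m by apply: leq_exp2r_any; rewrite leq_subr.
have predE : m * N ^ m.-1 * N = m * N ^ m.
  by case: m {IH le_pow} => [|m] //=; rewrite expnSr mulnA.
rewrite !expnS /=; move: ((N - q) ^ m) (N ^ m) (N ^ m.-1) IH le_pow predE.
move=> a b c; nia.
Qed.

Lemma pow_sub_ratio N q m : q <= N -> 4 * m * q <= N -> 3 * N ^ m <= 4 * (N - q) ^ m.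
Proof.
move=> le_qN small; have := bernoulli_sub m le_qN.
case: m small => [|m] small; first by rewrite !expn0.
rewrite expnS /=; move: (N ^ m) ((N - q) ^ m.+1) => b c; nia.
Qed.

Lemma binom_shift_bound a b t : b <= a ->
  'C(a + t, b) * (a.+1 - b) ^ t <= 'C(a, b) * a.+1 ^ t.
Proof.
move=> le_ba; elim: t => [|t IH]; first by rewrite addn0 !expn0.
have step : (a + t).+1 * 'C(a + t, b) = ((a + t).+1 - b) * 'C((a + t).+1, b).
  by rewrite -mul_bin_down.
rewrite addnS !expnS.
move: 'C((a + t).+1, b) 'C(a + t, b) ((a.+1 - b) ^ t) (a.+1 ^ t) 'C(a, b) step IH.
move=> X Y P Q Z step IH.
have pos : 0 < (a + t).+1 - b by lia.
rewrite -(leq_pmul2r pos).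
have lhsE : X * ((a.+1 - b) * P) * ((a + t).+1 - b) = (a.+1 - b) * (a + t).+1 * (Y * P).
  by rewrite [X * _]mulnC -mulnA [X * _]mulnC -step mulnACA [P * Y]mulnC.
have coef : (a.+1 - b) * (a + t).+1 <= a.+1 * ((a + t).+1 - b) by nia.
rewrite lhsE; apply: leq_trans (leq_mul coef IH) _; nia.
Qed.

Lemma binom_ratio a b t : b <= a -> 4 * t * b <= a.+1 ->
  3 * 'C(a + t, b) <= 4 * 'C(a, b).
Proof.
move=> le_ba small.
have shift := binom_shift_bound t le_ba.
have ratio : 3 * a.+1 ^ t <= 4 * (a.+1 - b) ^ t by apply: pow_sub_ratio; lia.
have pos : 0 < (a.+1 - b) ^ t by rewrite expn_gt0; lia.
rewrite -(leq_pmul2r pos); move: (a.+1 ^ t) ((a.+1 - b) ^ t) pos shift ratio.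
move=> W Z pos shift ratio; nia.
Qed.

(* C(2k-1, k) <= 4^(k-1): the k-subsets and the (k-1)-subsets of a
   (2k-1)-set are equally many and together at most 2^(2k-1). *)
Lemma central_binom_le k : 0 < k -> 'C(2 * k - 1, k) <= 4 ^ k.-1.
Proof.
move=> k_gt0; set m := 2 * k - 1.
pose X := [set A : {set 'I_m} | #|A| == k].
pose Y := [set A : {set 'I_m} | #|A| == k.-1].
have disjXY : X :&: Y = set0.
  apply/setP=> A; rewrite !inE; apply/negbTE/negP=> /andP[/eqP -> /eqP]; lia.
have subXY : X :|: Y \subset powerset [set: 'I_m].
  by apply/subsetP=> A _; rewrite inE subsetT.
have := subset_leq_card subXY.
rewrite card_powerset cardsT card_ord cardsU disjXY cards0 subn0.
rewrite !card_draws card_ord -[in 'C(m, k.-1)]bin_sub /m; last lia.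
have -> : 2 * k - 1 - k.-1 = k by lia.
have -> : 4 ^ k.-1 = 2 ^ (2 * k - 2) by rewrite -(expnM 2 2); congr (_ ^ _); lia.
have -> : 2 * k - 1 = (2 * k - 2).+1 by lia.
rewrite expnS; lia.
Qed.

(* (k + 1)^2 >= 4k, as (k - 1)^2 >= 0. *)
Lemma four_mul_le_sq k r : k < r -> 4 * k <= r * r.
Proof.
move=> lt_kr; have := leq_mul lt_kr lt_kr.
have : 0 <= k.-1 * k.-1 by [].
nia.
Qed.

Section ThresholdArithmetic.

Variables r k n : nat.
Hypotheses (r_ge3 : 3 <= r) (k_ge2 : 2 <= k) (k_lt_r : k < r).
Hypothesis threshold : 2 * (r - k) * r ^ k.+1 <= n * 'C(2 * k - 1, k).

(* C(2k-1, k) <= r^(k-1): from 4^(k-1) if r >= 4, directly if r = 3 = k + 1. *)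
Lemma central_binom_le_pow : 'C(2 * k - 1, k) <= r ^ k.-1.
Proof.
have [r_eq3 | r_ne3] := eqVneq r 3.
  by rewrite r_eq3 (_ : k = 2) //; lia.
apply: leq_trans (central_binom_le (ltnW k_ge2)) _; apply: leq_exp2r_any; lia.
Qed.

Lemma threshold_pow : r ^ k.+1 = r * r * r ^ k.-1.
Proof. by rewrite -mulnA -!expnS; congr (_ ^ _); lia. Qed.

Lemma threshold_n_large : 2 * (r - k) * (r * r) <= n.
Proof.
have C_pos : 0 < 'C(2 * k - 1, k) by rewrite bin_gt0; lia.
rewrite -(leq_pmul2r C_pos); apply: leq_trans threshold.
by rewrite threshold_pow [X in _ <= X]mulnA leq_mul2l central_binom_le_pow orbT.
Qed.

Lemma threshold_n_ge : r + k <= n.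
Proof.
have sq_ge : 2 * r <= r * r by rewrite leq_mul2r; lia.
have sq_le : r * r <= (r - k) * (r * r) by rewrite leq_pmull //; lia.
by move: threshold_n_large; rewrite -mulnA; lia.
Qed.

(* 4 (r-k) r^(k+1) < 3 C(2k-1, k) (n - 2k + 1): discarding the 2k - 1
   vertices of the majority set costs less than a quarter of the threshold. *)
Lemma threshold_product_large :
  4 * (r - k) * r ^ k.+1 < 3 * 'C(2 * k - 1, k) * (n - (2 * k - 1)).
Proof.
have n_large := threshold_n_large.
have sq := four_mul_le_sq k_lt_r.
have sq_le : r * r <= (r - k) * (r * r) by rewrite leq_pmull //; lia.
have small_part : 3 * 'C(2 * k - 1, k) * (2 * k - 1) < 2 * (r - k) * r ^ k.+1.
  have small : 3 * (2 * k - 1) < 2 * (r - k) * (r * r) by lia.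
  rewrite threshold_pow mulnA mulnAC.
  apply: leq_ltn_trans (_ : _ <= 3 * (2 * k - 1) * r ^ k.-1) _.
    by rewrite leq_mul2l central_binom_le_pow orbT.
  by rewrite ltn_pmul2r ?expn_gt0 //; lia.
have split_n : 'C(2 * k - 1, k) * (n - (2 * k - 1)) + 'C(2 * k - 1, k) * (2 * k - 1)
               = n * 'C(2 * k - 1, k).
  have r_le : r <= r * r by rewrite leq_pmull //; lia.
  by rewrite -mulnDr subnK 1?mulnC //; lia.
move: threshold small_part split_n.
set C := 'C(2 * k - 1, k); set R := r ^ k.+1; set p := r - k; set m := 2 * k - 1.
rewrite -!mulnA; move: (p * R) (C * m) (C * (n - m)) (n * C) => pR Cm Cnm nC; lia.
Qed.

(* The key inequality: the branching bound is smaller than the size of the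
   majority construction.  With p = r - k and N = n - 2k + 1 one has
   p C(N, p) = N C(N-1, p-1) and C(n-k-1, p-1) <= 4/3 C(N-1, p-1). *)
Lemma threshold_binomial_inequality :
  r ^ k.+1 * 'C(n - k.+1, r - k.+1) < 'C(2 * k - 1, k) * 'C(n - (2 * k - 1), r - k).
Proof.
have n_large := threshold_n_large; have prod_large := threshold_product_large.
have sq := four_mul_le_sq k_lt_r.
set C := 'C(2 * k - 1, k) in prod_large *; set R := r ^ k.+1 in prod_large *.
set p := r - k in n_large prod_large *; set N := n - (2 * k - 1) in prod_large *.
have p_gt0 : 0 < p by rewrite /p; lia.
have kp_le : 4 * k * p <= p * (r * r) by rewrite mulnC leq_mul2l sq orbT.
have sq_le : r * r <= p * (r * r) by rewrite leq_pmull.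
have N_large : p * (r * r) <= N by rewrite /N; move: n_large; rewrite -mulnA; lia.
have p_le : p <= p * (r * r) by rewrite leq_pmulr; lia.
have ratio : 3 * 'C(n - k.+1, r - k.+1) <= 4 * 'C(N - 1, p - 1).
  have -> : n - k.+1 = N - 1 + (k - 1) by rewrite /N; lia.
  have -> : r - k.+1 = p - 1 by rewrite /p; lia.
  have shrink : 4 * (k - 1) * (p - 1) <= 4 * k * p by rewrite !leq_mul ?leq_subr.
  by apply: binom_ratio; lia.
have diag : N * 'C(N - 1, p - 1) = p * 'C(N, p).
  by rewrite !subn1 mul_bin_diag prednK.
have CN1_gt0 : 0 < 'C(N - 1, p - 1) by rewrite bin_gt0; lia.
rewrite -(ltn_pmul2l (_ : 0 < 3 * p)) ?muln_gt0 //.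
move: 'C(n - k.+1, r - k.+1) 'C(N - 1, p - 1) 'C(N, p) ratio diag CN1_gt0.
move=> CM CN1 CNp ratio diag CN1_gt0.
have scaled_ratio := leq_mul (leqnn (p * R)) ratio.
have scaled_large : 4 * p * R * CN1 < 3 * C * N * CN1 by rewrite ltn_pmul2r.
clear -scaled_ratio scaled_large diag; nia.
Qed.

End ThresholdArithmetic.

Section NatBigMin.

Variables (I : finType) (P : pred I) (F : I -> nat) (x0 : nat).

Lemma leq_bigmin k :
  k <= x0 -> (forall i, P i -> k <= F i) -> k <= \big[minn/x0]_(i | P i) F i.
Proof.
move=> k_le_x0 k_le_F; apply: (big_ind (fun v => k <= v)) => //.
by move=> a b ka kb; rewrite leq_min ka kb.
Qed.

Lemma bigmin_le_term i : P i -> \big[minn/x0]_(j | P j) F j <= F i.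
Proof.
move=> Pi; move: (mem_index_enum i); elim: (index_enum I) => // j s IH.
rewrite inE big_cons; case/orP => [/eqP <-|i_in_s]; first by rewrite Pi geq_minl.
case: (P j); last exact: IH i_in_s.
exact: leq_trans (geq_minr _ _) (IH i_in_s).
Qed.

Lemma bigmin_le_default : \big[minn/x0]_(j | P j) F j <= x0.
Proof.
elim: (index_enum I) => [|j s IH]; first by rewrite big_nil.
rewrite big_cons; case: (P j) => //.
exact: leq_trans (geq_minr _ _) IH.
Qed.

End NatBigMin.

Lemma card_bigcup_le (I T : finType) (P : pred I) (F : I -> {set T}) :
  #|\bigcup_(i | P i) F i| <= \sum_(i | P i) #|F i|.
Proof.
elim/big_rec2: _ => [|i A m _ IH]; first by rewrite cards0.
by apply: leq_trans (leq_card_setU _ _) _; rewrite leq_add2l.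
Qed.

Lemma setU_setD_sub (T : finType) (S f : {set T}) : S \subset f -> S :|: (f :\: S) = f.
Proof. by move=> Sf; rewrite -{1}(setIidPr Sf) setID. Qed.

Lemma card_setC_ord n (S : {set 'I_n}) : #|~: S| = n - #|S|.
Proof. by rewrite cardsCs setCK card_ord. Qed.

Lemma extend_by_one (T : finType) (S f : {set T}) :
  S \subset f -> #|f| = #|S|.+1 -> exists2 y, y \notin S & f = y |: S.
Proof.
move=> Sf card_f.
have : #|f :\: S| == 1 by rewrite cardsD (setIidPr Sf) card_f subSnn.
case/cards1P=> y diffE; exists y.
  have : y \in f :\: S by rewrite diffE set11.
  by rewrite inE => /andP[].
by rewrite -(setU_setD_sub Sf) diffE setUC.
Qed.

Section Degrees.

Variables (n r : nat) (H : hgraph n).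
Hypothesis H_uniform : uniform r H.

Lemma uniformP e : e \in H -> #|e| = r.
Proof. by move=> eH; move/forallP: H_uniform => /(_ e); rewrite eH => /eqP. Qed.

Lemma hdeg_set0 : hdeg H set0 = #|H|.
Proof.
by rewrite /hdeg; congr #|pred_of_set _|; apply/setP=> e; rewrite inE sub0set andbT.
Qed.

(* Trivial bound: the edges through S correspond to (r - |S|)-subsets of
   the complement of S. *)
Lemma hdeg_le_binom (S : {set 'I_n}) : hdeg H S <= 'C(n - #|S|, r - #|S|).
Proof.
rewrite /hdeg -(@card_in_imset _ _ (fun f => f :\: S)); last first.
  move=> f g; rewrite !inE => /andP[_ Sf] /andP[_ Sg] fgE.
  by rewrite -(setU_setD_sub Sf) -(setU_setD_sub Sg) fgE.
rewrite -card_setC_ord -cards_draws; apply: subset_leq_card.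
apply/subsetP=> B /imsetP[f + ->]; rewrite !inE => /andP[fH Sf].
rewrite setDE subsetIr /= -setDE cardsD (setIidPr Sf) uniformP //.
Qed.

Lemma hdeg_geq (S Y : {set 'I_n}) :
  [disjoint Y & S] -> (forall y, y \in Y -> y |: S \in H) -> #|Y| <= hdeg H S.
Proof.
move=> disjYS Y_ext.
rewrite -(@card_in_imset _ _ (fun y => y |: S)); last first.
  move=> y z yY zY yzE.
  have : y \in z |: S by rewrite -yzE setU11.
  by rewrite in_setU1 => /orP[/eqP // | yS]; move: (disjointFr disjYS yY); rewrite yS.
apply: subset_leq_card; apply/subsetP=> f /imsetP[y yY ->].
by rewrite inE Y_ext //= subsetUr.
Qed.

Lemma min_pos_codeg_le_card : min_pos_codeg r H <= #|H|.
Proof. exact: bigmin_le_default. Qed.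

Lemma min_pos_codeg_le_hdeg (S e : {set 'I_n}) :
  #|S| = r.-1 -> e \in H -> S \subset e -> min_pos_codeg r H <= hdeg H S.
Proof.
move=> card_S eH Se; apply: bigmin_le_term.
by rewrite card_S eqxx /=; apply/existsP; exists e; rewrite eH.
Qed.

Lemma min_pos_codeg_geq k : 0 < r -> H != set0 ->
  (forall S e : {set 'I_n}, #|S| = r.-1 -> e \in H -> S \subset e -> k <= hdeg H S) ->
  k <= min_pos_codeg r H.
Proof.
move=> r_gt0 /set0Pn[e0 e0H] k_le_hdeg; apply: leq_bigmin.
  have [x xe0] : exists x, x \in e0 by apply/card_gt0P; rewrite uniformP.
  have card_S : #|e0 :\ x| = r.-1 by rewrite -(uniformP e0H) (cardsD1 x e0) xe0.
  apply: leq_trans (k_le_hdeg _ _ card_S e0H (subD1set e0 x)) _.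
  by apply: subset_leq_card; apply/subsetP=> f; rewrite inE => /andP[].
move=> S /andP[/eqP card_S /existsP[e /andP[eH Se]]].
exact: k_le_hdeg card_S eH Se.
Qed.

(* Every transversal has at least min_pos_codeg vertices: take an edge e
   meeting T minimally and x in e and T; by minimality every edge through
   e minus x adds a vertex of T. *)
Lemma min_pos_codeg_le_transversal (T : {set 'I_n}) :
  Defs.transversal H T -> min_pos_codeg r H <= #|T|.
Proof.
move=> tT; have [H0 | [e0 e0H]] := set_0Vmem H.
  by apply: leq_trans (min_pos_codeg_le_card) _; rewrite H0 cards0.
have [e eH' e_min] := arg_minnP (fun e => #|e :&: T|) e0H.
have eH : e \in H by [].
have /set0Pn[x] : T :&: e != set0 by move/forallP: tT => /(_ e); rewrite eH.
rewrite inE => /andP[xT xe]; set S := e :\ x.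
have card_e : #|e| = #|S|.+1 by rewrite (cardsD1 x e) xe.
have card_S : #|S| = r.-1 by rewrite -(uniformP eH) card_e.
apply: leq_trans (min_pos_codeg_le_hdeg card_S eH (subD1set e x)) _.
have fewer : #|S :&: T| < #|e :&: T|.
  have -> : S :&: T = (e :&: T) :\ x by rewrite setIDAC.
  by rewrite [X in _ < X](cardsD1 x) inE xe xT.
have edges_through_S : [set f in H | S \subset f] \subset [set y |: S | y in T].
  apply/subsetP=> f; rewrite inE => /andP[fH Sf].
  have card_f : #|f| = #|S|.+1 by rewrite -card_e !uniformP.
  have [y yS fE] := extend_by_one Sf card_f.
  rewrite fE; apply/imsetP; exists y => //; apply/negPn/negP=> yT.
  have := e_min _ fH; rewrite fE setIUl (_ : [set y] :&: T = set0) ?set0U.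
    by rewrite leqNgt fewer.
  by apply/setP=> z; rewrite !inE; case: eqP => // ->; rewrite (negbTE yT).
exact: leq_trans (subset_leq_card edges_through_S) (leq_imset_card _ _).
Qed.

End Degrees.

Section Transversals.

Variables (n : nat) (H : hgraph n).

Lemma tau_le_card (T : {set 'I_n}) : Defs.transversal H T -> tau H <= #|T|.
Proof. exact: bigmin_le_term. Qed.

Lemma tau_geq k :
  k <= n -> (forall T, Defs.transversal H T -> k <= #|T|) -> k <= tau H.
Proof. exact: leq_bigmin. Qed.

Lemma edge_transversal e : intersecting H -> e \in H -> Defs.transversal H e.
Proof.
move=> /forallP H_int eH; apply/forallP=> f; apply/implyP=> fH.
by move: (H_int e); rewrite eH => /forallP /(_ f); rewrite fH.
Qed.

Section Branching.

Variables (r k : nat).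
Hypotheses (H_uniform : uniform r H) (H_int : intersecting H).
Hypothesis large_tau : forall T, Defs.transversal H T -> k < #|T|.

(* Branching bound: a set S of at most k vertices misses some edge e, and
   every edge through S contains S plus a vertex of e; iterating j times
   multiplies the trivial bound by r^j. *)
Lemma hdeg_branching j (S : {set 'I_n}) : #|S| + j <= k.+1 ->
  hdeg H S <= r ^ j * 'C(n - (#|S| + j), r - (#|S| + j)).
Proof.
elim: j S => [|j IH] S small_S.
  by rewrite expn0 mul1n addn0; apply: hdeg_le_binom.
have [e eH Se] : exists2 e, e \in H & S :&: e = set0.
  have : ~~ Defs.transversal H S by apply/negP=> /large_tau; lia.
  rewrite negb_forall => /existsP[e]; rewrite negb_imply negbK => /andP[eH /eqP Se].
  by exists e.
have cover : [set f in H | S \subset f] \subset \bigcup_(x in e) [set f in H | x |: S \subset f].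
  apply/subsetP=> f; rewrite inE => /andP[fH Sf].
  move/forallP: H_int => /(_ e); rewrite eH => /forallP /(_ f); rewrite fH /=.
  case/set0Pn=> x; rewrite inE => /andP[xe xf].
  by apply/bigcupP; exists x => //; rewrite inE fH subUset sub1set xf Sf.
apply: leq_trans (subset_leq_card cover) _; apply: leq_trans (card_bigcup_le _ _) _.
have branch x : x \in e -> #|[set f in H | x |: S \subset f]| <=
                          r ^ j * 'C(n - (#|S| + j.+1), r - (#|S| + j.+1)).
  move=> xe; have xS : x \notin S.
    by apply: contraT => /negbNE xS; move/setP: Se => /(_ x); rewrite !inE xS xe.
  have card_xS : #|x |: S| = #|S|.+1 by rewrite cardsU1 xS.
  by have := IH (x |: S); rewrite card_xS addSnnS; apply.
apply: leq_trans; first by apply: leq_sum => x xe; apply: branch.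
by rewrite sum_nat_const (uniformP H_uniform eH) expnS mulnA.
Qed.

Lemma card_le_of_large_tau : #|H| <= r ^ k.+1 * 'C(n - k.+1, r - k.+1).
Proof. by have := @hdeg_branching k.+1 set0; rewrite cards0 hdeg_set0; apply. Qed.

End Branching.

End Transversals.

Lemma disjoint_parts (T : finType) (A B D : {set T}) :
  B \subset A -> D \subset ~: A ->
  [/\ (B :|: D) :&: A = B, (B :|: D) :&: ~: A = D & B :&: D = set0].
Proof.
move=> BA DcA; have BcA : B \subset ~: ~: A by rewrite setCK.
have disj_DA : D :&: A = set0 by apply: disjoint_setI0; rewrite disjoints_subset.
have disj_BcA : B :&: ~: A = set0 by apply: disjoint_setI0; rewrite disjoints_subset.
split; rewrite ?setIUl ?disj_DA ?disj_BcA ?setU0 ?set0U.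
- exact/setIidPl.
- exact/setIidPl.
- by apply: disjoint_setI0; rewrite disjoints_subset (subset_trans BA) // subsetC.
Qed.

Section MajorityConstruction.

Variables (n r k : nat) (A : {set 'I_n}).
Hypotheses (k_gt0 : 0 < k) (card_A : #|A| = 2 * k - 1).

Definition majority_hgraph : hgraph n :=
  [set e : {set 'I_n} | (#|e| == r) && (k <= #|e :&: A|)].

Lemma majority_uniform : uniform r majority_hgraph.
Proof. by apply/forallP=> e; apply/implyP; rewrite inE => /andP[]. Qed.

(* Two k-subsets of the (2k-1)-set A always meet. *)
Lemma majority_intersecting : intersecting majority_hgraph.
Proof.
apply/forallP=> e; apply/implyP; rewrite inE => /andP[_ k_le_e].
apply/forallP=> f; apply/implyP; rewrite inE => /andP[_ k_le_f].
apply: contraTneq (leqnn #|A|) => ef_disj.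
have parts_disj : (e :&: A) :&: (f :&: A) = set0.
  by rewrite setIACA setIid ef_disj set0I.
have := subset_leq_card (_ : (e :&: A) :|: (f :&: A) \subset A).
rewrite cardsU parts_disj cards0 subn0 subUset !subsetIr card_A => /(_ isT).
by rewrite -ltnNge; lia.
Qed.

(* Choosing k vertices in A and r - k outside A gives distinct edges. *)
Lemma majority_card : k <= r ->
  'C(2 * k - 1, k) * 'C(n - (2 * k - 1), r - k) <= #|majority_hgraph|.
Proof.
move=> k_le_r.
pose inside := [set B : {set 'I_n} | B \subset A & #|B| == k].
pose outside := [set D : {set 'I_n} | D \subset ~: A & #|D| == r - k].
have -> : 'C(2 * k - 1, k) * 'C(n - (2 * k - 1), r - k) = #|setX inside outside|.
  by rewrite cardsX !cards_draws card_setC_ord card_A.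
rewrite -(@card_in_imset _ _ (fun BD => BD.1 :|: BD.2)); last first.
  move=> [B1 D1] [B2 D2]; rewrite !inE /= => /andP[/andP[B1A _] /andP[D1cA _]].
  move=> /andP[/andP[B2A _] /andP[D2cA _]] union_eq.
  have [inside1 outside1 _] := disjoint_parts B1A D1cA.
  have [inside2 outside2 _] := disjoint_parts B2A D2cA.
  have -> : B1 = B2 by rewrite -inside1 -inside2 union_eq.
  by have -> : D1 = D2 by rewrite -outside1 -outside2 union_eq.
apply: subset_leq_card; apply/subsetP=> f /imsetP[[B D] + ->] /=.
rewrite !inE /= => /andP[/andP[BA /eqP card_B] /andP[DcA /eqP card_D]].
have [inside_eq _ disj] := disjoint_parts BA DcA.
rewrite inside_eq card_B leqnn andbT cardsU disj cards0 subn0 card_B card_D.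
by rewrite subnKC.
Qed.

(* An (r-1)-set S inside an edge either already has k vertices of A, and can
   be extended by any of the n - r + 1 outside vertices, or has exactly k - 1,
   and can be extended by any of the k vertices of A not in S. *)
Lemma majority_min_pos_codeg : k < r -> r + k <= n ->
  k <= min_pos_codeg r majority_hgraph.
Proof.
move=> k_lt_r rk_le_n; have r_gt0 : 0 < r by lia.
have extend (S : {set 'I_n}) y : #|S| = r.-1 -> y \notin S -> k <= #|(y |: S) :&: A| ->
    y |: S \in majority_hgraph.
  by move=> card_S yS many; rewrite inE cardsU1 yS card_S add1n prednK // eqxx.
apply: (min_pos_codeg_geq majority_uniform r_gt0).
  apply/set0Pn/card_gt0P; apply: leq_trans (majority_card (ltnW k_lt_r)).
  by rewrite muln_gt0 !bin_gt0; lia.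
move=> S e card_S; rewrite inE => /andP[/eqP card_e k_le_e] Se.
have [rich | poor] := leqP k #|S :&: A|.
  apply: leq_trans (hdeg_geq (Y := ~: S) _ _); first by rewrite card_setC_ord; lia.
    by rewrite disjoints_subset.
  move=> y; rewrite inE => yS; apply: extend => //.
  by apply: leq_trans rich _; apply/subset_leq_card/setSI/subsetUr.
have card_e' : #|e| = #|S|.+1 by rewrite card_e card_S prednK.
have [z _ eE] := extend_by_one Se card_e'.
have card_SA : #|S :&: A| = k.-1.
  suff : #|e :&: A| <= #|S :&: A|.+1 by lia.
  rewrite eE setIUl; apply: leq_trans (leq_card_setU _ _) _.
  by rewrite -add1n leq_add2r -(cards1 z) subset_leq_card ?subsetIl.
apply: leq_trans (hdeg_geq (Y := A :\: S) _ _).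
    by rewrite cardsD setIC card_SA card_A; lia.
  by rewrite disjoints_subset setDE subsetIr.
move=> y; rewrite inE => /andP[yS yA]; apply: extend => //.
rewrite setIUl (setIidPl _) ?sub1set // cardsU1 inE (negbTE yS) card_SA; lia.
Qed.

End MajorityConstruction.

Lemma exists_set_of_card n m : m <= n -> exists A : {set 'I_n}, #|A| = m.
Proof.
move=> m_le_n; have /card_gt0P[A] : 0 < #|[set A : {set 'I_n} | #|A| == m]|.
  by rewrite card_draws card_ord bin_gt0.
by rewrite inE => /eqP; exists A.
Qed.

Theorem lemma8 (r k n : nat) (H : hgraph n) :
  3 <= r -> 2 <= k -> k <= r ->
  2 * (r - k) * r ^ k.+1 <= n * 'C(2 * k - 1, k) ->
  uniform r H -> intersecting H -> k <= min_pos_codeg r H ->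
  (forall H' : hgraph n, uniform r H' -> intersecting H' ->
     k <= min_pos_codeg r H' -> #|H'| <= #|H|) ->
  tau H = k.
Proof.
move=> r_ge3 k_ge2 k_le_r threshold H_uniform H_int k_le_codeg H_max.
have /card_gt0P[e0 e0H] : 0 < #|H|.
  by have := leq_trans k_le_codeg (min_pos_codeg_le_card r H); lia.
have k_le_n : k <= n.
  rewrite (leq_trans k_le_r) // -(uniformP H_uniform e0H).
  by apply: leq_trans (max_card _) _; rewrite card_ord.
apply/anti_leq/andP; split; last first.
  apply: tau_geq k_le_n _ => T tT.
  exact: leq_trans k_le_codeg (min_pos_codeg_le_transversal H_uniform tT).
case: (ltngtP k r) k_le_r => [k_lt_r | //= | ->] _; last first.
  by rewrite -(uniformP H_uniform e0H) tau_le_card ?edge_transversal.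
rewrite leqNgt; apply/negP=> tau_large.
have large_tau T : Defs.transversal H T -> k < #|T|.
  by move=> tT; apply: leq_trans tau_large (tau_le_card tT).
have rk_le_n := threshold_n_ge r_ge3 k_ge2 k_lt_r threshold.
have [A card_A] := @exists_set_of_card n (2 * k - 1) ltac:(lia).
have k_gt0 : 0 < k by lia.
(* the majority hypergraph beats the branching bound, contradicting maximality *)
have := H_max _ (majority_uniform r k A) (majority_intersecting r k_gt0 card_A)
          (majority_min_pos_codeg k_gt0 card_A k_lt_r rk_le_n).
have := majority_card card_A (ltnW k_lt_r).
have := card_le_of_large_tau H_uniform H_int large_tau.
have := threshold_binomial_inequality r_ge3 k_ge2 k_lt_r threshold.
lia.
Qed.
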